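(* Let $\mathbb{F}$ be a field, $P\in\mathbb{F}[x_1,\ldots,x_n]$ a polynomial, $\mathcal{F}\subseteq\mathbb{F}^n$ a finite set with $\mathcal{F}\ne\mathbb{F}^n$, and $h\in\mathbb{F}^n\setminus\mathcal{F}$. Put $\mathcal{T}:=\mathcal{F}\cup\{h\}$. Suppose $P(h)\ne 0$ and $P(f)=0$ for every $f\in\mathcal{F}$. If $y$ is a monomial with $y\in \mathrm{Sm}(\prec_{deg},\mathcal{T})\setminus\mathrm{Sm}(\prec_{deg},\mathcal{F})$, then $\deg P\ge\deg y$.
   Context: For a finite nonempty $\mathcal{F}\subseteq\mathbb{F}^n$, $I(\mathcal{F}):=\{f\in\mathbb{F}[x_1,\ldots,x_n]: f(v)=0\ \forall v\in\mathcal{F}\}$. For a term order $\prec$, the leading monomial $\mathrm{lm}(f)$ of a nonzero polynomial is its $\prec$-largest monomial with nonzero coefficient; $\mathrm{Sm}(\prec,\mathcal{F})$ is the set of monomials that are not the leading monomial of any nonzero $f\in I(\mathcal{F})$ (standard monomials). The deglex order $\prec_{deg}$: $u\prec_{deg}v$ iff $\deg u<\deg v$, or $\deg u=\deg v$ and $u\prec_{lex}v$, where for $u=x^{i}$, $v=x^{j}$, $u\prec_{lex}v$ iff $i_k<j_k$ at the smallest index $k$ with $i_k\ne j_k$ (so $x_n\prec\cdots\prec x_1$). *)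

From HB Require Import structures.
From mathcomp Require Import all_boot all_order all_algebra.
Set Implicit Arguments. Unset Strict Implicit. Unset Printing Implicit Defensive.
Import Order.TTheory GRing.Theory Num.Theory.

Definition pt (F : fieldType) (n : nat) := {ffun 'I_n -> F}.

Definition mon (n : nat) := {ffun 'I_n -> nat}.

Definition mdeg (n : nat) (m : mon n) : nat := (\sum_(i < n) m i)%N.

Record mpoly (F : fieldType) (n : nat) := MPoly {
  mcoef : mon n -> F;
  msupp : seq (mon n);
  msupp_ok : forall m, mcoef m != 0%R -> m \in msupp
}.

Definition meval (F : fieldType) (n : nat) (P : mpoly F n) (v : pt F n) : F :=
  (\sum_(m <- undup (msupp P)) mcoef P m * \prod_(i < n) v i ^+ m i)%R.

Definition mtdeg (F : fieldType) (n : nat) (P : mpoly F n) : nat :=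
  (\max_(m <- msupp P | mcoef P m != 0%R) mdeg m)%N.

Definition lex_lt (n : nat) (u v : mon n) : Prop :=
  exists k : 'I_n, (forall j : 'I_n, (j < k)%N -> u j = v j) /\ (u k < v k)%N.

Definition deglex_lt (n : nat) (u v : mon n) : Prop :=
  (mdeg u < mdeg v)%N \/ (mdeg u = mdeg v /\ lex_lt u v).

Definition is_lm (F : fieldType) (n : nat) (P : mpoly F n) (m : mon n) : Prop :=
  mcoef P m != 0%R /\
  forall m', mcoef P m' != 0%R -> m' = m \/ deglex_lt m' m.

Definition in_ideal (F : fieldType) (n : nat) (S : seq (pt F n)) (f : mpoly F n) : Prop :=
  forall v, v \in S -> meval f v = 0%R.

Definition Sm_deg (F : fieldType) (n : nat) (S : seq (pt F n)) (m : mon n) : Prop :=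
  ~ exists f : mpoly F n, in_ideal S f /\ is_lm f m.

(** If some [f] vanishing on [Fs] had deglex-leading monomial [y] while
    [deg P < deg y], then [g := f - (f(h)/P(h)) P] would vanish on [h :: Fs]:
    on [Fs] both [f] and [P] vanish, and at [h] the scalar is chosen to cancel.
    Every monomial of [P] has degree below [deg y], hence is deglex-below [y],
    so subtracting a multiple of [P] keeps [y] as the leading monomial of [g].
    Thus [y] would not be standard for [h :: Fs]. *)

From HB Require Import structures.
From mathcomp Require Import all_boot all_order all_algebra.
Set Implicit Arguments. Unset Strict Implicit. Unset Printing Implicit Defensive.
Import Order.TTheory GRing.Theory Num.Theory.
Local Open Scope ring_scope.

Section MPolyFacts.
Variables (F : fieldType) (n : nat).
Implicit Types (P f : mpoly F n) (v : pt F n) (m : mon n).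

Lemma meval_eq_sum P v (s : seq (mon n)) :
  uniq s -> (forall m, mcoef P m != 0 -> m \in s) ->
  meval P v = \sum_(m <- s) mcoef P m * \prod_(i < n) v i ^+ m i.
Proof.
have drop0 (t : seq (mon n)) :
    \sum_(m <- t) mcoef P m * \prod_(i < n) v i ^+ m i =
    \sum_(m <- t | mcoef P m != 0) mcoef P m * \prod_(i < n) v i ^+ m i.
  by rewrite [RHS]big_mkcond; apply: eq_bigr => m _; case: eqP => [->|]; rewrite ?mul0r.
move=> s_uniq s_supp; rewrite /meval (drop0 (undup _)) (drop0 s) -big_filter -[RHS]big_filter.
apply/perm_big/uniq_perm; rewrite ?filter_uniq ?undup_uniq // => m.
rewrite !mem_filter mem_undup; case: (boolP (mcoef P m != 0)) => //= Pm.
by rewrite (msupp_ok Pm) s_supp.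
Qed.

Lemma mdeg_le_mtdeg P m : mcoef P m != 0 -> (mdeg m <= mtdeg P)%N.
Proof. by move=> Pm; apply: (leq_bigmax_seq (F := @mdeg n)) => //; apply: msupp_ok. Qed.

Lemma deglex_lt_irr m : ~ deglex_lt m m.
Proof. by case=> [|[_ [k [_]]]]; rewrite ltnn. Qed.

Section SubScaled.
Variables (f P : mpoly F n) (c : F).

Definition msubZ_coef m := mcoef f m - c * mcoef P m.

Lemma msubZ_coef_neq0 m :
  msubZ_coef m != 0 -> (mcoef f m != 0) || (mcoef P m != 0).
Proof.
rewrite /msubZ_coef; case: (mcoef f m =P 0) => //= ->.
by rewrite sub0r oppr_eq0 mulf_eq0 negb_or => /andP[].
Qed.

Lemma msubZ_supp m : msubZ_coef m != 0 -> m \in msupp f ++ msupp P.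
Proof.
by rewrite mem_cat => /msubZ_coef_neq0 /orP[/msupp_ok -> | /msupp_ok ->]; rewrite ?orbT.
Qed.

Definition msubZ := MPoly msubZ_supp.

Lemma meval_msubZ v : meval msubZ v = meval f v - c * meval P v.
Proof.
set s := undup (msupp f ++ msupp P).
have s_uniq : uniq s by apply: undup_uniq.
have s_f m : mcoef f m != 0 -> m \in s.
  by move/msupp_ok; rewrite mem_undup mem_cat => ->.
have s_P m : mcoef P m != 0 -> m \in s.
  by move/msupp_ok; rewrite mem_undup mem_cat => ->; rewrite orbT.
have s_g m : mcoef msubZ m != 0 -> m \in s by move/msubZ_supp; rewrite mem_undup.
rewrite !(meval_eq_sum _ s_uniq) // mulr_sumr -sumrB.
by apply: eq_bigr => m _; rewrite /= /msubZ_coef mulrBl mulrA.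
Qed.

Lemma is_lm_msubZ y :
  (forall m, mcoef P m != 0 -> deglex_lt m y) -> is_lm f y -> is_lm msubZ y.
Proof.
move=> P_below [fy f_below].
have Py : mcoef P y = 0.
  by apply/eqP; apply: contraT => /P_below /deglex_lt_irr.
split; first by rewrite /= /msubZ_coef Py mulr0 subr0.
move=> m /msubZ_coef_neq0 /orP[/f_below // | /P_below]; by right.
Qed.

End SubScaled.

Lemma in_ideal_cons_msubZ (S : seq (pt F n)) h f P :
  meval P h != 0 -> in_ideal S f -> in_ideal S P ->
  in_ideal (h :: S) (msubZ f P (meval f h / meval P h)).
Proof.
move=> Ph fS PS v; rewrite inE meval_msubZ => /predU1P [->|Sv].
  by rewrite divfK // subrr.
by rewrite (fS v Sv) (PS v Sv) mulr0 subr0.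
Qed.

End MPolyFacts.

Theorem theorem3 (F : fieldType) (n : nat) (P : mpoly F n)
  (Fs : seq (pt F n)) (h : pt F n)
  (hFs_proper : exists v : pt F n, v \notin Fs)
  (hh : h \notin Fs)
  (hPh : meval P h != 0%R)
  (hPF : forall f, f \in Fs -> meval P f = 0%R)
  (y : mon n)
  (hyT : Sm_deg (h :: Fs) y)
  (hyF : ~ Sm_deg Fs y) :
  (mdeg y <= mtdeg P)%N.
Proof.
rewrite leqNgt; apply/negP => degP_lt_y.
apply: hyF => -[f [fFs lm_f]]; apply: hyT.
exists (msubZ f P (meval f h / meval P h)); split.
  exact: in_ideal_cons_msubZ.
apply: is_lm_msubZ lm_f => m /mdeg_le_mtdeg Pm; left.
exact: leq_ltn_trans Pm degP_lt_y.
Qed.
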